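(* Let $G$ be a finite abelian group and let $f$ be an automorphism of $\mathcal{P}_{0}(G)$ with pullback $g$. If $H$ is a subgroup of $G$, then $f(H)=g[H]=\{g(h):h\in H\}$.
   Context: For an additively written finite abelian group $G$, $\mathcal{P}_{0}(G)$ is the monoid of all subsets of $G$ containing $0$, with setwise addition and identity $\{0\}$. Every automorphism $f$ of $\mathcal{P}_0(G)$ maps $2$-element sets to $2$-element sets; the pullback of $f$ is the bijection $g:G\to G$ defined by $g(0)=0$ and, for nonzero $a\in G$, by $f(\{0,a\})=\{0,g(a)\}$. *)

(* The finite abelian group G is a finGroupType gT with
   [abelian [set: gT]]; the group law (written multiplicatively in MathComp)
   plays the role of the paper's addition, 1 plays the role of 0, and the
   pointwise set product A * B on {set gT} is the setwise sum A + B. *)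
From mathcomp Require Import all_boot all_fingroup.
Set Implicit Arguments.
Unset Strict Implicit.
Unset Printing Implicit Defensive.
Local Open Scope group_scope.

Definition inP0 (gT : finGroupType) (A : {set gT}) : bool := 1 \in A.

(* f, viewed as a function on {set gT}, restricts to a monoid automorphism
   of P_0(G) (values outside P_0(G) are irrelevant). *)
Definition P0_automorphism (gT : finGroupType) (f : {set gT} -> {set gT}) : Prop :=
  [/\ (forall A, inP0 A -> inP0 (f A)),
      (forall A B, inP0 A -> inP0 B -> f A = f B -> A = B),
      (forall B, inP0 B -> exists2 A, inP0 A & f A = B),
      f [1] = [1] &
      (forall A B, inP0 A -> inP0 B -> f (A * B) = f A * f B)].

Definition is_pullback (gT : finGroupType) (f : {set gT} -> {set gT})
    (g : gT -> gT) : Prop :=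
  g 1 = 1 /\ (forall a : gT, a != 1 -> f [set 1; a] = [set 1; g a]).

(* For a set K with 1 \in K and K * K = K, an element y lies in K exactly
   when [set 1; y] * K = K.  An automorphism f of P_0(G) maps [set 1; y] to
   [set 1; g y], preserves such idempotent sets and transports the equation,
   so g y \in f H <-> y \in H; as g is injective on a finite type it is onto,
   whence f H = g @: H. *)
From mathcomp Require Import all_boot all_fingroup.
Set Implicit Arguments.
Unset Strict Implicit.
Unset Printing Implicit Defensive.
Local Open Scope group_scope.

Lemma set2_injr (T : finType) (x : T) : injective (fun y => [set x; y]).
Proof.
move=> y z /= eq_xy_xz.
have /set2P[y_x | //] : y \in [set x; z] by rewrite -eq_xy_xz set22.
have /set2P[z_x | z_y] : z \in [set x; y] by rewrite eq_xy_xz set22.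
  by rewrite y_x z_x.
by rewrite z_y.
Qed.

Lemma inP0_set21 (gT : finGroupType) (a : gT) : inP0 [set 1; a].
Proof. exact: set21. Qed.

Lemma memE_set21_mul (gT : finGroupType) (K : {set gT}) (y : gT) :
  K * K = K -> 1 \in K -> (y \in K) = ([set 1; y] * K == K).
Proof.
move=> KK K1; apply/idP/eqP => [yK | <-]; last first.
  by apply/mulsgP; exists y 1; rewrite ?set22 ?mulg1.
apply/eqP; rewrite eqEsubset -{2}KK mulSg ?subUset ?sub1set ?K1 ?yK //=.
by apply/subsetP => z zK; rewrite -[z]mul1g mem_mulg ?set21.
Qed.

Section PullbackOfP0Automorphism.

Variables (gT : finGroupType) (f : {set gT} -> {set gT}) (g : gT -> gT).
Hypotheses (f_aut : P0_automorphism f) (g_pullback : is_pullback f g).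

Lemma pullback_set21 (a : gT) : f [set 1; a] = [set 1; g a].
Proof.
case: f_aut g_pullback => _ _ _ f1 _ [g1 gE].
have [-> | a_ne1] := eqVneq a 1; last exact: gE.
by rewrite g1 setUid -set1gE f1.
Qed.

Lemma pullback_inj : injective g.
Proof.
case: f_aut => _ f_inj _ _ _ a b gab.
apply: set2_injr (f_inj _ _ (inP0_set21 a) (inP0_set21 b) _).
by rewrite !pullback_set21 gab.
Qed.

Lemma mem_P0aut_pullback (K : {set gT}) (y : gT) :
  inP0 K -> K * K = K -> (g y \in f K) = (y \in K).
Proof.
case: f_aut => f_P0 f_inj _ _ fM K1 KK.
have fKK : f K * f K = f K by rewrite -fM ?KK.
rewrite (memE_set21_mul y KK K1) (memE_set21_mul _ fKK (f_P0 K K1)).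
rewrite -pullback_set21 -fM ?inP0_set21 //.
have P0_yK : inP0 ([set 1; y] * K).
  by apply/mulsgP; exists 1 1; rewrite ?set21 ?mulg1.
by apply/eqP/eqP => [/(f_inj _ _ P0_yK K1) | ->].
Qed.

End PullbackOfP0Automorphism.

Theorem lemma2p4 (gT : finGroupType) (f : {set gT} -> {set gT}) (g : gT -> gT)
  (H : {group gT}) :
  abelian [set: gT] ->
  P0_automorphism f ->
  is_pullback f g ->
  f H = g @: H.
Proof.
move=> _ f_aut g_pullback; have g_inj := pullback_inj f_aut g_pullback.
apply/setP => z; rewrite -(f_finv g_inj z) mem_imset //.
by rewrite (mem_P0aut_pullback f_aut g_pullback) ?mulGid // /inP0 group1.
Qed.
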